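(* For every integer $n \geq 4$, $$\gamma_{b,2}(C_4 \square C_n) = 4\left\lfloor \frac{n}{6} \right\rfloor + \begin{cases} 0 & \text{if } n \equiv 0 \pmod 6,\\ 2 & \text{if } n \equiv 1 \text{ or } 2 \pmod 6,\\ 3 & \text{if } n \equiv 3 \text{ or } 4 \pmod 6,\\ 4 & \text{if } n \equiv 5 \pmod 6.\end{cases}$$
   Context: For a graph $G$, a $2$-limited broadcast is a function $f: V(G) \to \{0,1,2\}$. A vertex $u$ hears the broadcast from $v$ if $f(v) > 0$ and $d(u,v) \leq f(v)$, where $d$ is the distance in $G$. The broadcast $f$ is dominating if every vertex of $G$ hears the broadcast from some vertex. The cost of $f$ is $\sum_{v \in V(G)} f(v)$. The $2$-limited broadcast domination number $\gamma_{b,2}(G)$ is the minimum cost of a $2$-limited dominating broadcast on $G$. $C_n$ denotes the cycle on $n$ vertices and $\square$ the Cartesian product of graphs. *)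

From mathcomp Require Import all_boot.
Set Implicit Arguments. Unset Strict Implicit. Unset Printing Implicit Defensive.

(* d(u,v) <= k in the graph with adjacency e: there is a walk of length <= k. *)
Definition within (T : finType) (e : rel T) (k : nat) (u v : T) : Prop :=
  exists p : seq T, [/\ path e u p, last u p = v & size p <= k].

(* Cycle C_n on vertex set 'I_n (intended for n >= 3). *)
Definition cycle_adj (n : nat) : rel 'I_n :=
  fun i j => (j == (i.+1 %% n) :> nat) || (i == (j.+1 %% n) :> nat).
Arguments cycle_adj : clear implicits.

Definition cart_adj (A B : finType) (eA : rel A) (eB : rel B) : rel (A * B) :=
  fun x y => ((x.1 == y.1) && eB x.2 y.2) || ((x.2 == y.2) && eA x.1 y.1).

Definition broadcast2 (T : finType) := {ffun T -> 'I_3}.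

Definition dominating (T : finType) (e : rel T) (f : broadcast2 T) : Prop :=
  forall u : T, exists v : T, 0 < f v /\ within e (f v) u v.

Definition cost (T : finType) (f : broadcast2 T) : nat := \sum_(v : T) (f v : nat).

Definition is_gamma_b2 (T : finType) (e : rel T) (m : nat) : Prop :=
  (exists f : broadcast2 T, dominating e f /\ cost f = m) /\
  (forall f : broadcast2 T, dominating e f -> m <= cost f).

Definition C4xCn_adj (n : nat) : rel ('I_4 * 'I_n) :=
  cart_adj (cycle_adj 4) (cycle_adj n).

Definition gamma_formula (n : nat) : nat :=
  4 * (n %/ 6) +
  match n %% 6 with
  | 0 => 0 | 1 => 2 | 2 => 2 | 3 => 3 | 4 => 3 | _ => 4
  end.
Arguments C4xCn_adj : clear implicits.

(* A vertex broadcasting with strength 2 is heard by at most 12 vertices and one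
   with strength 1 by at most 5, so counting the pairs (hearer, broadcaster) gives
     4n + #(vertices hearing twice or more) + #(strength-1 vertices) <= 6 cost.
   The resulting bound is the formula except for n = 1, 3 (mod 6), where a broadcast of cost one
   less would have at most one strength-1 vertex and at most one vertex hearing twice.  Such a
   broadcast is rigid: after a strength-2 vertex (r, c), the next strength-2 vertex is
   (r + 2, c + 3) or (r, c + 4), so the strength-2 vertex of column c + j lies in row
   r + 2j (mod 4), which is absurd after one turn around the odd cycle C_n.  The local facts
   behind this step are decided by computation in a 4 x 7 window of the torus.

   Upper bound.  Strength-2 vertices at (0, 6i) and (2, 6i + 3) dominate every vertex of
   C_4 x C_6k exactly once; a tail of cost 0, 2, 2, 3, 3 or 4 handles the n mod 6 remaining
   columns. *)

From mathcomp Require Import all_boot zify.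
Set Implicit Arguments. Unset Strict Implicit. Unset Printing Implicit Defensive.

Definition absdiff (i j : nat) := (i - j) + (j - i).

Definition cdist (n i j : nat) := minn (absdiff i j) (n - absdiff i j).

Lemma modn_lt_double x n : x < n + n -> x %% n = if x < n then x else x - n.
Proof.
move=> lt_x2n; case: ifP => [/modn_small //|ge_xn].
by rewrite -{1}(subnK (_ : n <= x)) ?modnDr ?modn_small //; lia.
Qed.

Lemma cdist_sym n i j : cdist n i j = cdist n j i.
Proof. rewrite /cdist /absdiff; lia. Qed.

Lemma cdist_le_absdiff n i j : cdist n i j <= absdiff i j.
Proof. exact: geq_minl. Qed.

Lemma cdist_triangle n i j l : i < n -> j < n -> l < n ->
  cdist n i l <= cdist n i j + cdist n j l.
Proof. rewrite /cdist /absdiff; lia. Qed.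

Lemma cdistxx n i : cdist n i i = 0.
Proof. by rewrite /cdist /absdiff subnn min0n. Qed.

Lemma modn_offset n a x : 0 < n -> exists2 i, i < n & (a + i) %% n = x %% n.
Proof.
move=> n_gt0; exists ((x + (n - a %% n)) %% n); first by rewrite ltn_pmod.
rewrite modnDmr -modnDml.
have lt_an : a %% n < n by rewrite ltn_pmod.
by rewrite (_ : _ + _ = x + n) ?modnDr //; lia.
Qed.

Lemma cdist_shift n a i j : i < n -> j < n ->
  cdist n ((a + i) %% n) ((a + j) %% n) = cdist n i j.
Proof.
move=> lt_in lt_jn; rewrite -(modnDml a i) -(modnDml a j).
have lt_an : a %% n < n by rewrite ltn_pmod //; lia.
move: (a %% n) lt_an => b lt_bn.
rewrite !modn_lt_double; try lia.
rewrite /cdist /absdiff; case: ifP; case: ifP; lia.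
Qed.

Section Walks.
Variables (T : finType) (e : rel T).

Lemma within_refl u : within e 0 u u.
Proof. by exists [::]. Qed.

Lemma within_edge u v : e u v -> within e 1 u v.
Proof. by move=> euv; exists [:: v]; rewrite /= euv. Qed.

Lemma within_trans k l u v w : within e k u v -> within e l v w -> within e (k + l) u w.
Proof.
move=> [p [pu <- kp]] [q [qv <- lq]].
by exists (p ++ q); rewrite cat_path last_cat pu qv size_cat leq_add.
Qed.

Lemma within_mono k l u v : k <= l -> within e k u v -> within e l u v.
Proof. by move=> kl [p [pu pv kp]]; exists p; split=> //; apply: leq_trans kl. Qed.

Lemma within_sym k u v : symmetric e -> within e k u v -> within e k v u.
Proof.
move=> esym [p [pu <- kp]]; exists (rev (belast u p)); split.
- by rewrite rev_path (eq_path (e' := e)) // => x y; rewrite esym.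
- by case: p {pu kp} => //= x p; rewrite rev_cons last_rcons.
- by rewrite size_rev size_belast.
Qed.

End Walks.

Lemma within_cart_l (A B : finType) (eA : rel A) (eB : rel B) k x y (z : B) :
  within eA k x y -> within (cart_adj eA eB) k (x, z) (y, z).
Proof.
move=> [p [px <- kp]]; exists [seq (a, z) | a <- p]; rewrite size_map last_map.
split=> //; elim: p x px {kp} => //= a p IHp x /andP [xa ap].
by rewrite IHp // /cart_adj /= xa eqxx orbT.
Qed.

Lemma within_cart_r (A B : finType) (eA : rel A) (eB : rel B) k (z : A) x y :
  within eB k x y -> within (cart_adj eA eB) k (z, x) (z, y).
Proof.
move=> [p [px <- kp]]; exists [seq (z, b) | b <- p]; rewrite size_map last_map.
split=> //; elim: p x px {kp} => //= b p IHp x /andP [xb bp].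
by rewrite IHp // /cart_adj /= xb eqxx.
Qed.

Section Cycle.
Variable n : nat.
Local Notation N := n.+1.

Lemma cycle_adj_sym : symmetric (cycle_adj N).
Proof. by move=> i j; rewrite /cycle_adj orbC. Qed.

Lemma cycle_adj_cdist (i j : 'I_N) : cycle_adj N i j -> cdist N i j <= 1.
Proof.
rewrite /cycle_adj /cdist /absdiff.
have := ltn_ord i; have := ltn_ord j; move: (i : nat) (j : nat) => a b ltb lta.
rewrite !modn_lt_double; try lia.
by case: ifP; case: ifP => ? ? /orP [] /eqP; lia.
Qed.

Lemma within_cycle_forward (i : 'I_N) k : within (cycle_adj N) k i (inord ((i + k) %% N)).
Proof.
elim: k => [|k IHk]; first by rewrite addn0 modn_small // inord_val; apply: within_refl.
rewrite -[k.+1]addn1; apply: within_trans IHk (within_edge _).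
by rewrite /cycle_adj !inordK ?ltn_pmod // -[((i + k) %% N).+1]addn1 modnDml addnA eqxx.
Qed.

Lemma within_cycle (i j : 'I_N) : within (cycle_adj N) (cdist N i j) i j.
Proof.
wlog le_ij : i j / i <= j.
  move=> IH; case: (leqP i j) => [/IH //|/ltnW /IH].
  by rewrite cdist_sym; apply: within_sym cycle_adj_sym.
have fwd : within (cycle_adj N) (j - i) i j.
  by have := within_cycle_forward i (j - i); rewrite subnKC // modn_small // inord_val.
have bwd : within (cycle_adj N) (N - (j - i)) j i.
  have := within_cycle_forward j (N - (j - i)).
  have -> : j + (N - (j - i)) = i + N by have := ltn_ord j; lia.
  by rewrite modnDr modn_small // inord_val.
rewrite /cdist /absdiff (_ : i - j = 0) ?add0n; last lia.
by rewrite /minn; case: ifP => _; last apply: within_sym cycle_adj_sym bwd.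
Qed.

End Cycle.

(** * The torus C_4 x C_n and its windows *)

(* The window point [(r, w)], with [r < 4] and [w < 7], stands for the torus vertex
   [(a + r, b + w)] (see [wvtx] below); [wdist] bounds the torus distance from above as soon as
   the torus has 7 columns, so facts about the window established by computation hold in every
   such torus. *)
Definition window : seq (nat * nat) := [seq (r, w) | r <- iota 0 4, w <- iota 0 7].

Definition wdist (x y : nat * nat) := cdist 4 x.1 y.1 + absdiff x.2 y.2.

Lemma windowP (x : nat * nat) : reflect (x.1 < 4 /\ x.2 < 7) (x \in window).
Proof.
case: x => r w; apply: (iffP allpairsP) => [[[r' w'] []] | [lt_r lt_w]].
- by rewrite !mem_iota => /andP [_ ?] /andP [_ ?] [-> ->].
- by exists (r, w); rewrite !mem_iota.
Qed.

Section Torus.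
Variable m : nat.
Local Notation N := m.+1.
Local Notation V := ('I_4 * 'I_N)%type.
Local Notation e := (C4xCn_adj N).

Definition tdist (u v : V) := cdist 4 u.1 v.1 + cdist N u.2 v.2.

Lemma tdist_triangle u v w : tdist u w <= tdist u v + tdist v w.
Proof.
rewrite /tdist; have := cdist_triangle (ltn_ord u.1) (ltn_ord v.1) (ltn_ord w.1).
by have := cdist_triangle (ltn_ord u.2) (ltn_ord v.2) (ltn_ord w.2); lia.
Qed.

Lemma edge_tdist u v : e u v -> tdist u v <= 1.
Proof.
rewrite /C4xCn_adj /cart_adj /tdist => /orP [] /andP [/eqP eq_uv adj_uv].
- by rewrite eq_uv cdistxx (cycle_adj_cdist adj_uv).
- by rewrite eq_uv cdistxx addn0 (cycle_adj_cdist adj_uv).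
Qed.

Lemma within_tdist k u v : within e k u v -> tdist u v <= k.
Proof.
move=> [p [pu <- kp]]; apply: leq_trans kp.
elim: p u pu => [|x p IHp] u /=; first by rewrite /tdist !cdistxx.
case/andP => /edge_tdist ux /IHp xp; apply: leq_trans (tdist_triangle u x _) _.
exact: leq_add ux xp.
Qed.

Lemma tdist_within u v : within e (tdist u v) u v.
Proof.
case: u v => [u1 u2] [v1 v2]; apply: within_trans (within_cart_l _ _ (within_cycle u1 v1)) _.
exact: within_cart_r (within_cycle u2 v2).
Qed.

Lemma dominatingP (f : broadcast2 V) :
  dominating e f <-> forall u, exists v, 0 < f v /\ tdist u v <= f v.
Proof.
split=> dom u; have [v [fv uv]] := dom u; exists v; split=> //.
- exact: within_tdist.
- exact: within_mono uv (tdist_within u v).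
Qed.

Definition vtx (r c : nat) : V := (inord (r %% 4), inord (c %% N)).

Lemma vtx1 r c : ((vtx r c).1 : nat) = r %% 4.
Proof. by rewrite inordK ?ltn_pmod. Qed.

Lemma vtx2 r c : ((vtx r c).2 : nat) = c %% N.
Proof. by rewrite inordK ?ltn_pmod. Qed.

Lemma vtx_ord (v : V) : vtx v.1 v.2 = v.
Proof. by case: v => r c; rewrite /vtx !modn_small ?ltn_ord // !inord_val. Qed.

Lemma vtx_congr r r' c c' : r = r' %[mod 4] -> c = c' %[mod N] -> vtx r c = vtx r' c'.
Proof. by rewrite /vtx => -> ->. Qed.

Lemma vtx_inj r r' c c' : vtx r c = vtx r' c' -> r = r' %[mod 4] /\ c = c' %[mod N].
Proof.
by move=> eq_v; rewrite -(vtx1 r c) -(vtx1 r' c') -(vtx2 r c) -(vtx2 r' c') eq_v.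
Qed.

Lemma vtx_offset (v : V) a b : exists i j, [/\ i < 4, j < N & v = vtx (a + i) (b + j)].
Proof.
have [i lt_i4 ai] := modn_offset a v.1 (isT : 0 < 4).
have [j lt_jN bj] := modn_offset b v.2 (ltn0Sn m).
by exists i, j; split=> //; rewrite -[LHS]vtx_ord; apply: vtx_congr.
Qed.

Lemma tdist_vtx a b r r' w w' : r < 4 -> r' < 4 -> w < N -> w' < N ->
  tdist (vtx (a + r) (b + w)) (vtx (a + r') (b + w')) = cdist 4 r r' + cdist N w w'.
Proof. by move=> *; rewrite /tdist !vtx1 !vtx2 !cdist_shift. Qed.

Definition wvtx a b (x : nat * nat) : V := vtx (a + x.1) (b + x.2).

Lemma wvtx_dist a b (x y : nat * nat) : 7 <= N -> x \in window -> y \in window ->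
  tdist (wvtx a b x) (wvtx a b y) <= wdist x y.
Proof.
move=> N_ge7 /windowP [? ?] /windowP [? ?].
by rewrite /wvtx tdist_vtx ?leq_add2l ?cdist_le_absdiff //; lia.
Qed.

Lemma wvtx_inj a b (x y : nat * nat) : 7 <= N -> x \in window -> y \in window ->
  wvtx a b x = wvtx a b y -> x = y.
Proof.
case: x y => [x1 x2] [y1 y2] N_ge7 /windowP [/= ? ?] /windowP [/= ? ?].
move=> /vtx_inj[] /= /eqP + /eqP; rewrite !eqn_modDl !modn_small //; try lia.
by move=> /eqP -> /eqP ->.
Qed.

Lemma wvtx_near a b (x : nat * nat) v :
  x \in window -> 2 <= x.2 <= 4 -> tdist (wvtx a b x) v <= 2 ->
  exists y : nat * nat, [/\ y \in window, v = wvtx a b y & wdist x y = tdist (wvtx a b x) v].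
Proof.
move=> /windowP [lt_x1 lt_x2] x2_mid.
have [i [j [lt_i4 lt_jN ->]]] := vtx_offset v (a + x.1) (b + x.2).
have -> : tdist (wvtx a b x) (vtx (a + x.1 + i) (b + x.2 + j)) = cdist 4 0 i + minn j (N - j).
  rewrite /wvtx -{1}(addn0 (a + x.1)) -{1}(addn0 (b + x.2)) tdist_vtx //.
  by rewrite /cdist /absdiff; lia.
have row : cdist 4 x.1 ((x.1 + i) %% 4) = cdist 4 0 i.
  by rewrite -{1}(modn_small lt_x1) -{1}(addn0 x.1) cdist_shift.
have row_congr : a + x.1 + i = a + (x.1 + i) %% 4 %[mod 4] by rewrite modnDmr addnA.
have lt_row : (x.1 + i) %% 4 < 4 by rewrite ltn_pmod.
move=> near; case: (boolP (j <= N - j)) => [fwd | bwd].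
- exists ((x.1 + i) %% 4, x.2 + j); split.
  + by apply/windowP; split=> //=; lia.
  + by apply: vtx_congr; rewrite // addnA.
  + by rewrite /wdist row /absdiff /=; lia.
- exists ((x.1 + i) %% 4, x.2 + j - N); split.
  + by apply/windowP; split=> //=; lia.
  + apply: vtx_congr; rewrite //= addnBA; last lia.
    by rewrite addnA -(modnDr (_ - N)) subnK //; lia.
  + by rewrite /wdist row /absdiff /=; lia.
Qed.

(* Column [c + m] of C_(m+1) is column [c - 1]. *)
Lemma wvtx_behind r c i w : wvtx r (c + m) (i, w.+1) = vtx (r + i) (c + w).
Proof. by apply: vtx_congr => //=; rewrite (_ : _ + _ = c + w + N) ?modnDr //; lia. Qed.

Lemma vtx_row_offset r r' c : exists2 i, i < 4 & vtx (r + i) c = vtx r' c.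
Proof.
by have [i lt_i4 eq_i] := modn_offset r r' (isT : 0 < 4); exists i => //; apply: vtx_congr.
Qed.

End Torus.

(** * Counting the hearers *)

Lemma card_set_sum (T : finType) (P : pred T) : #|[set x | P x]| = \sum_x (P x : nat).
Proof. by rewrite -sum1dep_card big_mkcond; apply: eq_bigr => x _; case: (P x). Qed.

Section Balls.
Variable m : nat.
Hypothesis m_gt0 : 0 < m.
Local Notation N := m.+1.
Local Notation V := ('I_4 * 'I_N)%type.

Lemma card_tball (u : V) k : k <= 2 ->
  #|[set v | tdist u v <= k]| <= count (fun y => wdist (0, 2) y <= k) window.
Proof.
move=> le_k2; pose b := u.2 + m.-1.
have center : wvtx m u.1 b (0, 2) = u.
  rewrite -[RHS]vtx_ord /wvtx /b /=; apply: vtx_congr; rewrite ?addn0 // -addnA -(modnDr u.2 N).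
  by congr (_ %% _); lia.
rewrite -size_filter -(size_map (wvtx m u.1 b)); apply: leq_trans (card_size _).
apply/subset_leq_card/subsetP => v; rewrite !inE => near.
have [|y [wy eq_v dist]] := @wvtx_near m u.1 b (0, 2) v isT isT; first by rewrite center; lia.
by rewrite eq_v map_f // mem_filter wy dist center near.
Qed.

Lemma card_tball1 (u : V) : #|[set v | tdist u v <= 1]| <= 5.
Proof. exact: (card_tball u (isT : 1 <= 2)). Qed.

Lemma card_tball2 (u : V) : #|[set v | tdist u v <= 2]| <= 12.
Proof. exact: (card_tball u (isT : 2 <= 2)). Qed.

End Balls.

Section Counting.
Variable m : nat.
Local Notation N := m.+1.
Local Notation V := ('I_4 * 'I_N)%type.
Local Notation e := (C4xCn_adj N).
Variable f : broadcast2 V.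

Definition covers (v u : V) := (0 < f v) && (tdist u v <= f v).
Definition coverers u := [set v | covers v u].
Definition multicovered := [set u | 1 < #|coverers u|].
Definition level k := [set v | f v == k :> nat].

Lemma broadcast_cases v : [\/ f v = 0 :> nat, f v = 1 :> nat | f v = 2 :> nat].
Proof. by case: (f v) => [[|[|[|]]]] //= _; [constructor 1 | constructor 2 | constructor 3]. Qed.

Lemma cost_levels : cost f = #|level 1| + 2 * #|level 2|.
Proof.
rewrite /cost !card_set_sum big_distrr -big_split; apply: eq_bigr => v _ /=.
by case: (broadcast_cases v) => ->.
Qed.

Lemma sum_coverers_le : 0 < m -> \sum_u #|coverers u| + #|level 1| <= 6 * cost f.
Proof.
move=> m_gt0.
rewrite (eq_bigr (fun u => \sum_v (covers v u : nat))) => [|u _]; last exact: card_set_sum.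
rewrite exchange_big /= /level card_set_sum /cost big_distrr -big_split /=.
apply: leq_sum => v _; rewrite -card_set_sum.
have ball : #|[set u | covers v u]| <= #|[set u | tdist v u <= f v]|.
  apply/subset_leq_card/subsetP => u; rewrite !inE /covers => /andP [_].
  by rewrite /tdist cdist_sym [cdist N _ _]cdist_sym.
case: (broadcast_cases v) => fv; rewrite fv /=.
- by rewrite addn0 leqn0 cards_eq0; apply/eqP/setP => u; rewrite !inE /covers fv.
- rewrite fv in ball.
  by apply: leq_trans (leq_add (leq_trans ball (card_tball1 m_gt0 v)) (leqnn _)) _.
- rewrite fv in ball.
  by apply: leq_trans (leq_add (leq_trans ball (card_tball2 m_gt0 v)) (leqnn _)) _.
Qed.

Lemma sum_coverers_ge : dominating e f -> 4 * N + #|multicovered| <= \sum_u #|coverers u|.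
Proof.
move=> /dominatingP dom.
have -> : 4 * N = \sum_(u : V) 1 by rewrite sum1_card card_prod !card_ord.
rewrite card_set_sum -big_split; apply: leq_sum => u _ /=.
have [v [fv uv]] := dom u.
have : 0 < #|coverers u| by apply/card_gt0P; exists v; rewrite inE /covers fv uv.
by case: (ltnP 1 #|coverers u|) => /=; lia.
Qed.

End Counting.

(** * Rigidity of cheap broadcasts on C_4 x C_n, n odd *)

Definition overlap (y : nat * nat) g (z : nat * nat) h (x : nat * nat) :=
  (wdist x y <= g) && (wdist x z <= h).

(* A broadcast of strength [g] at [y] and one of strength [h] at [z] cannot coexist when there
   is at most one strength-1 vertex and at most one vertex hearing twice. *)
Definition clash (y : nat * nat) g (z : nat * nat) h :=
  if y == z then g != h else
  (g == 1) && (h == 1) ||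
  has (fun x1 => has (fun x2 => [&& x1 != x2, overlap y g z h x1 & overlap y g z h x2]) window)
    window.

(* Every broadcast [(y, g)] with [P y g] that does not clash with the known broadcasts [K]
   is one of [A]. *)
Definition forces (P : nat * nat -> nat -> bool) (K A : seq (nat * nat * nat)) :=
  all (fun z => (z.1 \in window) && (0 < z.2)) K &&
  all (fun y => all (fun g => P y g ==> ((y, g) \in A) || has (fun z => clash y g z.1 z.2) K)
                    [:: 1; 2]) window.

(* In the following window facts the strength-2 vertex sits at [(0, 1)]. *)
Lemma near_twos_clash :
  forces (fun y g => (g == 2) && (1 <= y.2 <= 3)) [:: ((0, 1), 2)] [:: ((0, 1), 2)].
Proof. by []. Qed.

Lemma cover_offset21 :
  forces (fun y g => wdist (2, 2) y <= g) [:: ((0, 1), 2)] [:: ((2, 4), 2); ((2, 3), 1)].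
Proof. by []. Qed.

Lemma cover_offset13 : forces (fun y g => wdist (1, 4) y <= g)
  [:: ((0, 1), 2); ((2, 3), 1)] [:: ((0, 5), 2); ((1, 6), 2)].
Proof. by []. Qed.

Lemma cover_offset33 : forces (fun y g => wdist (3, 4) y <= g)
  [:: ((0, 1), 2); ((2, 3), 1)] [:: ((0, 5), 2); ((3, 6), 2)].
Proof. by []. Qed.

Lemma far_pair_clash : clash (1, 6) 2 (3, 6) 2.
Proof. by []. Qed.

Lemma gap_offset3 :
  forces (fun y g => (g == 2) && (y.2 == 4)) [:: ((0, 1), 2); ((2, 3), 1)] [::].
Proof. by []. Qed.

Section Rigidity.
Variable m : nat.
Local Notation N := m.+1.
Local Notation V := ('I_4 * 'I_N)%type.
Local Notation e := (C4xCn_adj N).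
Hypothesis N_ge7 : 7 <= N.
Variable f : broadcast2 V.
Hypothesis dom : dominating e f.
Hypothesis few_ones : #|level f 1| <= 1.
Hypothesis few_multicovered : #|multicovered f| <= 1.

Local Notation vtx := (vtx m).
Local Notation wvtx := (wvtx m).
Local Notation F a b y := (nat_of_ord (f (wvtx a b y))).

Lemma clash_sound a b y g z h : y \in window -> z \in window ->
  F a b y = g -> F a b z = h -> 0 < g -> 0 < h -> ~~ clash y g z h.
Proof.
move=> wy wz fy fz g_gt0 h_gt0; rewrite /clash.
case: eqP => [eq_yz | /eqP ne_yz]; first by rewrite -fy -fz eq_yz eqxx.
have ne_v : wvtx a b y != wvtx a b z.
  by apply: contraNneq ne_yz => /wvtx_inj ->.
apply/norP; split.
  apply/negP => /andP [/eqP g1 /eqP h1]; move/negP: ne_v; apply.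
  by apply/eqP/(card_le1_eqP few_ones); rewrite inE ?fy ?fz ?g1 ?h1.
apply/hasP => -[x1 wx1 /hasP [x2 wx2 /and3P [ne_x over1 over2]]].
have multi x : x \in window -> overlap y g z h x -> wvtx a b x \in multicovered f.
  move=> wx /andP [xy xz]; rewrite inE; apply/card_gt1P.
  exists (wvtx a b y), (wvtx a b z); rewrite !inE /covers ne_v fy fz g_gt0 h_gt0.
  by rewrite !(leq_trans (wvtx_dist _ _ _ _ _)).
move/negP: ne_x; apply; apply/eqP/(@wvtx_inj m a b) => //.
exact/esym/(card_le1_eqP few_multicovered _ _ (multi _ wx1 over1) (multi _ wx2 over2)).
Qed.

Lemma forcesP a b P K A y : forces P K A -> all (fun z => F a b z.1 == z.2) K ->
  y \in window -> 0 < F a b y -> P y (F a b y) -> (y, F a b y) \in A.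
Proof.
case/andP => /allP wK /allP check /allP fK wy Fy_gt0 Py.
have Fy12 : F a b y \in [:: 1; 2] by have := ltn_ord (f (wvtx a b y)); rewrite !inE; lia.
move/allP: (check y wy) => /(_ _ Fy12); rewrite Py /= => /orP [// | /hasP [z zK]].
case/andP: (wK z zK) => wz z_gt0; move/eqP: (fK z zK) => Fz.
by rewrite (negbTE (clash_sound wy wz erefl Fz Fy_gt0 z_gt0)).
Qed.

Lemma forced_dominator a b x K A : x \in window -> 2 <= x.2 <= 4 ->
  forces (fun y g => wdist x y <= g) K A -> all (fun z => F a b z.1 == z.2) K ->
  exists2 z, z \in A & F a b z.1 = z.2.
Proof.
move=> wx x_mid forced known; have [v [fv_gt0 near]] := (dominatingP f).1 dom (wvtx a b x).
have [|y [wy eq_v dist]] := wvtx_near wx x_mid (leq_trans near _).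
  by rewrite -ltnS ltn_ord.
rewrite -dist in near; rewrite eq_v in fv_gt0 near.
by exists (y, F a b y); first exact: (forcesP forced known wy fv_gt0 near).
Qed.

Lemma two_near_eq r c : f (vtx r c) = 2 :> nat ->
  forall r' j, j < 3 -> f (vtx r' (c + j)) = 2 :> nat -> r' = r %[mod 4] /\ j = 0.
Proof.
move=> fo r' j lt_j3; have [i lt_i4 eq_i] := vtx_row_offset m r r' (c + j).
have Fo : F r (c + m) (0, 1) = 2 by rewrite wvtx_behind addn0 addn0.
rewrite -eq_i -wvtx_behind => Fy.
have wy : (i, j.+1) \in window by apply/windowP; split=> //=; lia.
have := forcesP (a := r) (b := c + m) near_twos_clash _ wy; rewrite /= Fo Fy lt_j3.
move=> /(_ isT isT isT); rewrite inE => /eqP [i0 ->]; split=> //.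
by move/vtx_inj: eq_i => [+ _]; rewrite i0 addn0.
Qed.

Lemma next_two r c : f (vtx r c) = 2 :> nat ->
  exists g, [/\ g = 3 \/ g = 4, f (vtx (r + 2 * g) (c + g)) = 2 :> nat &
                forall r' j, 0 < j < g -> f (vtx r' (c + j)) <> 2 :> nat].
Proof.
move=> fo; have near := two_near_eq fo.
have Fo : F r (c + m) (0, 1) = 2 by rewrite wvtx_behind !addn0.
have known1 : all (fun z => F r (c + m) z.1 == z.2) [:: ((0, 1), 2)] by rewrite /= Fo.
have [z] := forced_dominator (x := (2, 2)) isT isT cover_offset21 known1.
rewrite !inE => /orP [] /eqP -> /= Fz.
  exists 3; split; [by left | | ].
    rewrite (@vtx_congr m _ (r + 2) _ (c + 3)) -?wvtx_behind //; lia.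
  by move=> r' j /andP [j_gt0 lt_j3] /(near _ _ lt_j3) [_ j0]; lia.
have known : all (fun z => F r (c + m) z.1 == z.2) [:: ((0, 1), 2); ((2, 3), 1)].
  by rewrite /= Fo Fz.
have F05 : F r (c + m) (0, 5) = 2.
  have [z1] := forced_dominator (x := (1, 4)) isT isT cover_offset13 known.
  rewrite !inE => /orP [] /eqP -> //= F16.
  have [z2] := forced_dominator (x := (3, 4)) isT isT cover_offset33 known.
  rewrite !inE => /orP [] /eqP -> //= F36.
  have := clash_sound (y := (1, 6)) (z := (3, 6)) isT isT F16 F36 isT isT.
  by rewrite far_pair_clash.
exists 4; split; [by right | | ].
  rewrite (@vtx_congr m _ (r + 0) _ (c + 4)) -?wvtx_behind //; lia.
move=> r' j /andP [j_gt0 lt_j4]; case: (ltnP j 3) => [lt_j3 | ge_j3].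
  by move=> /(near _ _ lt_j3) [_ j0]; lia.
have -> : j = 3 by lia.
have [i lt_i4 <-] := vtx_row_offset m r r' (c + 3); rewrite -wvtx_behind => F2.
have wy : (i, 4) \in window by apply/windowP.
by have := forcesP gap_offset3 known wy; rewrite F2 => /(_ isT isT).
Qed.

(* Induction through the last column before [c + j] holding a strength-2 vertex. *)
Lemma twos_rotate r c : f (vtx r c) = 2 :> nat ->
  forall j r', f (vtx r' (c + j)) = 2 :> nat -> r' = r + 2 * j %[mod 4].
Proof.
move=> fo; elim/ltn_ind => j IHj r' fj.
have [j0 | j_gt0] := posnP j.
  by move: fj; rewrite j0 => /(two_near_eq fo (ltn0Sn 2)) [-> _]; rewrite muln0 addn0.
pose P k := (k < j) && [exists i : 'I_4, f (vtx i (c + k)) == 2 :> nat].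
have P0 : P 0.
  rewrite /P j_gt0; apply/existsP; exists (Ordinal (ltn_pmod r (isT : 0 < 4))).
  by rewrite /= (@vtx_congr m _ r _ c) ?modn_mod ?addn0 ?fo.
have ub k : P k -> k <= j by case/andP => /ltnW.
have [k /andP [lt_kj /existsP [i /eqP fk]] k_max] := ex_maxnP (ex_intro _ 0 P0) ub.
have [g [g34 fg gap]] := next_two fk.
have := IHj k lt_kj i fk.
case: (ltngtP j (k + g)) => [lt_j | gt_j | eq_j].
- by move: fj; rewrite -(subnKC (ltnW lt_kj)) addnA => /gap; lia.
- have /k_max : P (k + g).
    rewrite /P gt_j; apply/existsP; exists (Ordinal (ltn_pmod (i + 2 * g) (isT : 0 < 4))).
    by rewrite /= (@vtx_congr m _ (i + 2 * g) _ (c + k + g)) ?fg // ?modn_mod // addnA.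
  lia.
- move: fj; rewrite eq_j addnA -[c + k + g]addn0.
  move=> /(two_near_eq fg (ltn0Sn 2)) [+ _]; lia.
Qed.

Lemma no_two_if_odd : odd N -> forall v, f v != 2 :> nat.
Proof.
move=> odd_N v; apply/eqP => fv.
have fo : f (vtx v.1 v.2) = 2 :> nat by rewrite vtx_ord.
have := twos_rotate fo (j := N) (r' := v.1).
rewrite (@vtx_congr m _ v.1 _ v.2) ?modnDr // fo => /(_ erefl).
have : N %% 2 = 1 by rewrite modn2 odd_N.
lia.
Qed.

End Rigidity.

(** * The lower bound *)

Lemma gamma_formula_le_cost m (f : broadcast2 ('I_4 * 'I_m.+1)%type) :
  3 <= m -> dominating (C4xCn_adj m.+1) f -> gamma_formula m.+1 <= cost f.
Proof.
move=> m_ge3 dom; have m_gt0 : 0 < m by lia.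
have := sum_coverers_le f m_gt0.
have := sum_coverers_ge dom; have := cost_levels f.
have rigid : 7 <= m.+1 -> m.+1 %% 2 = 1 -> #|level f 1| <= 1 -> #|multicovered f| <= 1 ->
    #|level f 2| = 0.
  move=> N_ge7 N_odd ones multi; apply/eqP; rewrite cards_eq0; apply/eqP/setP => v.
  have odd_N : odd m.+1 by move: N_odd; rewrite modn2; case: odd.
  by rewrite !inE (negbTE (no_two_if_odd N_ge7 dom ones multi odd_N v)).
(* [lia] uses [rigid] when n = 1 or 3 (mod 6). *)
rewrite /gamma_formula; case Nmod: (m.+1 %% 6) => [|[|[|[|[|s]]]]]; lia.
Qed.

(** * A broadcast of cost [gamma_formula n] *)

Lemma bigmax_leq_sum_seq (I : eqType) (r : seq I) (P : pred I) (F : I -> nat) :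
  \max_(i <- r | P i) F i <= \sum_(i <- r | P i) F i.
Proof.
elim: r => [|x r IHr]; first by rewrite !big_nil.
rewrite !big_cons; case: (P x) => //.
by rewrite geq_max leq_addr (leq_trans IHr) ?leq_addl.
Qed.

Section Placement.
Variable m : nat.
Local Notation N := m.+1.
Local Notation V := ('I_4 * 'I_N)%type.
Local Notation e := (C4xCn_adj N).
Variable L : seq (nat * nat * nat).
Hypothesis L_le2 : forall x, x \in L -> x.2 <= 2.

(* A center [(r, c, g)] asks for strength [g] at the vertex [vtx m r c]. *)
Definition placement : broadcast2 V :=
  [ffun v => inord (\max_(x <- L | vtx m x.1.1 x.1.2 == v) x.2)].

Lemma placement_max v : placement v = \max_(x <- L | vtx m x.1.1 x.1.2 == v) x.2 :> nat.
Proof. by rewrite ffunE inordK // ltnS; apply/bigmax_leqP_seq => x /L_le2. Qed.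

Lemma placement_ge x : x \in L -> x.2 <= placement (vtx m x.1.1 x.1.2).
Proof. by move=> xL; rewrite placement_max (leq_bigmax_seq x). Qed.

Lemma cost_placement : cost placement <= \sum_(x <- L) x.2.
Proof.
rewrite /cost (eq_bigr _ (fun v _ => placement_max v)).
apply: (@leq_trans (\sum_v \sum_(x <- L | vtx m x.1.1 x.1.2 == v) x.2)).
  by apply: leq_sum => v _; apply: bigmax_leq_sum_seq.
under eq_bigr => v _ do rewrite big_mkcond.
rewrite exchange_big /=; apply: leq_sum => x _.
by rewrite -big_mkcond (big_pred1 (vtx m x.1.1 x.1.2)) // => v; rewrite eq_sym.
Qed.

Lemma dominating_placement :
  (forall u, exists2 x, x \in L & 0 < x.2 /\ tdist u (vtx m x.1.1 x.1.2) <= x.2) ->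
  dominating e placement.
Proof.
move=> covered; apply/dominatingP => u; have [x xL [x_gt0 near]] := covered u.
have ge := placement_ge xL.
by exists (vtx m x.1.1 x.1.2); split; apply: leq_trans ge.
Qed.

End Placement.

Definition blocks k : seq (nat * nat * nat) :=
  [seq (x.1, 6 * i + x.2, 2) | i <- iota 0 k, x <- [:: (0, 0); (2, 3)]].

(* Column offsets from [6k - 1]. *)
Definition tail_offsets s : seq (nat * nat * nat) :=
  match s with
  | 0 => [::]
  | 1 => [:: (0, 1, 2)]
  | 2 => [:: (0, 0, 1); (2, 1, 1)]
  | 3 | 4 => [:: (0, 1, 2); (2, 3, 1)]
  | _ => [:: (0, 1, 2); (2, 3, 2)]
  end.

Definition centers k s :=
  blocks k ++ [seq (x.1.1, 6 * k + x.1.2 - 1, x.2) | x <- tail_offsets s].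

Lemma sum_centers k s : s < 6 ->
  \sum_(x <- centers k s) x.2 = 4 * k + gamma_formula s.
Proof.
move=> lt_s6; rewrite big_cat big_map big_allpairs_dep /=.
rewrite (eq_bigr (fun _ => 4)) => [|i _]; last by rewrite !big_cons big_nil.
rewrite big_const_seq count_predT size_iota iter_addn_0 mulnC.
by case: s lt_s6 => [|[|[|[|[|[|]]]]]] //= _; rewrite ?big_cons ?big_nil.
Qed.

Lemma centers_valid k s x : s < 6 -> x \in centers k s ->
  [/\ x.1.1 < 4, x.1.2 < 6 * k + s, 0 < x.2 & x.2 <= 2].
Proof.
move=> lt_s6; rewrite mem_cat => /orP [/allpairsP [[i y] [/= + + ->]] | /mapP [y + ->]].
  rewrite mem_iota !inE => /andP [_ lt_ik].
  by case/orP => /eqP -> /=; split=> //; lia.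
case: s lt_s6 => [|[|[|[|[|[|]]]]]] //= _; rewrite !inE.
  by move=> /eqP -> /=; split=> //; lia.
all: by case/orP => /eqP -> /=; split=> //; lia.
Qed.

Lemma block_in_centers k s i y : i < k -> y \in [:: (0, 0); (2, 3)] ->
  (y.1, 6 * i + y.2, 2) \in centers k s.
Proof.
by move=> lt_ik yB; rewrite mem_cat (allpairs_f (fun i y => (y.1, 6 * i + y.2, 2))) ?mem_iota.
Qed.

Lemma origin_in_centers k s : s < 6 -> 4 <= 6 * k + s -> (0, 0, 2) \in centers k s.
Proof.
case: k => [|k] lt_s6 N_ge4; first by case: s lt_s6 N_ge4 => [|[|[|[|[|[|]]]]]].
exact: (@block_in_centers k.+1 s 0 (0, 0)).
Qed.

Definition reaches (r t : nat) (x : nat * nat * nat) := cdist 4 r x.1.1 + absdiff t x.1.2 <= x.2.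

Definition covers_strip (C : seq (nat * nat * nat)) (T : seq nat) :=
  all (fun r => all (fun t => has (reaches r t) C) T) (iota 0 4).

Lemma covers_stripP C T r t : covers_strip C T -> r < 4 -> t \in T ->
  exists2 x, x \in C & reaches r t x.
Proof.
move=> /allP /(_ r) + lt_r4 tT; rewrite mem_iota lt_r4 => /(_ isT) /allP /(_ t tT).
by move=> /hasP.
Qed.

Lemma periodic_strip : covers_strip [:: (0, 0, 2); (2, 3, 2); (0, 6, 2)] (iota 0 6).
Proof. by []. Qed.

(* The centers within reach of the columns from [6k - 2] on, with columns counted from [6k - 3]:
   the last block center, the tail, and column [n], a copy of the center [(0, 0)]. *)
Definition tail_candidates s :=
  (2, 0, 2) :: [seq (x.1.1, x.1.2 + 2, x.2) | x <- tail_offsets s] ++ [:: (0, s + 3, 2)].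

Lemma tail_strip s : s < 6 -> covers_strip (tail_candidates s) (iota 1 (s + 2)).
Proof. by case: s => [|[|[|[|[|[|]]]]]]. Qed.

Lemma centers_cover k s r c : s < 6 -> 4 <= 6 * k + s -> r < 4 -> c < 6 * k + s ->
  exists2 x, x \in centers k s & cdist 4 r x.1.1 + cdist (6 * k + s) c x.1.2 <= x.2.
Proof.
move=> lt_s6 N_ge4 lt_r4 lt_cN.
have reached x : x \in centers k s -> reaches r c x ->
    exists2 x, x \in centers k s & cdist 4 r x.1.1 + cdist (6 * k + s) c x.1.2 <= x.2.
  by move=> xC; exists x => //; apply: leq_trans (leq_add (leqnn _) (cdist_le_absdiff _ _ _)) _.
rewrite /reaches /absdiff in reached.
have block := @block_in_centers k s.
case: (ltnP c (6 * k - 2)) => [periodic | tail].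
  have t6 : c %% 6 \in iota 0 6 by rewrite mem_iota ltn_pmod.
  have [x + reach] := covers_stripP periodic_strip lt_r4 t6.
  rewrite /reaches /absdiff in reach; rewrite !inE => /or3P [] /eqP x_eq; rewrite x_eq /= in reach.
  - apply: (reached (0, 6 * (c %/ 6) + 0, 2)); last by rewrite /=; lia.
    by apply: (block _ (0, 0)) => //; lia.
  - apply: (reached (2, 6 * (c %/ 6) + 3, 2)); last by rewrite /=; lia.
    by apply: (block _ (2, 3)) => //; lia.
  - apply: (reached (0, 6 * (c %/ 6).+1 + 0, 2)); last by rewrite /=; lia.
    by apply: (block _ (0, 0)) => //; lia.
have tT : c + 3 - 6 * k \in iota 1 (s + 2) by rewrite mem_iota; lia.
have [x + reach] := covers_stripP (tail_strip lt_s6) lt_r4 tT; rewrite /reaches /absdiff in reach.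
rewrite in_cons mem_cat => /or3P [/eqP x_eq | /mapP [y yT x_eq] | ].
  3: rewrite inE => /eqP x_eq.
all: rewrite x_eq /= in reach.
- apply: (reached (2, 6 * (k - 1) + 3, 2)); last by rewrite /=; lia.
  by apply: (block _ (2, 3)) => //; lia.
- apply: (reached (y.1.1, 6 * k + y.1.2 - 1, y.2)); last by rewrite /=; lia.
  by rewrite mem_cat map_f ?orbT.
- exists (0, 0, 2); first exact: origin_in_centers.
  by rewrite /= /cdist /absdiff in reach *; lia.
Qed.

Lemma gamma_formula_mod6 n : gamma_formula n = 4 * (n %/ 6) + gamma_formula (n %% 6).
Proof. by rewrite /gamma_formula (@divn_small (n %% 6)) ?ltn_pmod // modn_mod. Qed.

Lemma dominating_cost_le_gamma_formula m : 3 <= m -> exists f : broadcast2 ('I_4 * 'I_m.+1)%type,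
  dominating (C4xCn_adj m.+1) f /\ cost f <= gamma_formula m.+1.
Proof.
move=> m_ge3; pose k := m.+1 %/ 6; pose s := m.+1 %% 6.
have lt_s6 : s < 6 by rewrite ltn_pmod.
have N_eq : m.+1 = 6 * k + s by rewrite /k /s mulnC -divn_eq.
have valid x : x \in centers k s -> [/\ x.1.1 < 4, x.1.2 < m.+1, 0 < x.2 & x.2 <= 2].
  by rewrite N_eq; apply: centers_valid.
have le2 x : x \in centers k s -> x.2 <= 2 by case/valid.
exists (placement m (centers k s)); split.
  apply: dominating_placement => // u.
  have [||| x xC near] := @centers_cover k s u.1 u.2 lt_s6; rewrite -?N_eq ?ltn_ord //.
  case: (valid x xC) => lt_x1 lt_x2 x_gt0 _; exists x => //; split=> //.
  by rewrite /tdist !vtx1 !vtx2 !modn_small // [X in cdist X _ x.1.2]N_eq; exact: near.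
apply: leq_trans (@cost_placement m _ le2) _.
by rewrite sum_centers // (gamma_formula_mod6 m.+1).
Qed.

Theorem theorem4p3 (n : nat) : 4 <= n ->
  is_gamma_b2 (C4xCn_adj n) (gamma_formula n).
Proof.
case: n => [|m] // n_ge4; have [f [dom_f cost_f]] := dominating_cost_le_gamma_formula n_ge4.
split; last by move=> g; apply: gamma_formula_le_cost.
by exists f; split=> //; apply/eqP; rewrite eqn_leq cost_f gamma_formula_le_cost.
Qed.
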